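(* Let $\mathcal C$ be a hyper-extensive category and $H\colon\mathcal C\to\mathcal C$ a functor preserving countable coproducts and having a terminal coalgebra $t\colon\nu H\to H(\nu H)$. Then the following four categories are isomorphic: (1) the Eilenberg–Moore category $\mathcal C^{\mathbb T}$ of the free-cia monad $\mathbb T$; (2) the slice category $\nu H/\mathrm{Alg}\,H$; (3) the category of Bloom algebras for $H$; (4) the category of complete Elgot algebras for $H$.
   Context: Hyper-extensive category: countable coproducts that are universal (pullbacks along arbitrary morphisms exist and preserve them), disjoint (injections monic, pairwise pullbacks initial), and coherent (a countable family of pairwise disjoint coproduct injections has copairing a coproduct injection). $\mathrm{Alg}\,H$ is the category of $H$-algebras; $(\nu H,t^{-1})$ is an $H$-algebra. An $H$-algebra $a\colon HA\to A$ is a cia if every $e\colon X\to HX+A$ has a unique solution, i.e. $s$ with $s=[a,\mathrm{id}_A]\cdot(Hs+\mathrm{id}_A)\cdot e$. Under the hypotheses, for every $Y$ a free cia $TY$ on $Y$ exists (with universal map $\eta_Y$); $\mathbb T$ is the resulting monad with unit $\eta$ and multiplication $\mu_Y\colon TTY\to TY$ the unique $H$-algebra morphism extending $\mathrm{id}_{TY}$. The slice $\nu H/\mathrm{Alg}\,H$ has objects $H$-algebra morphisms $(\nu H,t^{-1})\to(A,a)$ and morphisms commuting triangles of algebra morphisms. For $e\colon X\to HX+Y$ and $h\colon Y\to Z$ write $h\bullet e=(HX+h)\cdot e$. A complete Elgot algebra is $(A,a,\dagger)$ with $a\colon HA\to A$ and $\dagger$ assigning to each $e\colon X\to HX+A$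 a solution $e^\dagger\colon X\to A$ such that (Functoriality) if $e\colon X\to HX+A$, $f\colon Y\to HY+A$ and $h\colon X\to Y$ satisfy $f\cdot h=(Hh+A)\cdot e$, then $f^\dagger\cdot h=e^\dagger$; (Compositionality) for $e\colon X\to HX+Y$ and $f\colon Y\to HY+A$, with $e\oplus f=(\mathrm{can}+A)\cdot(HX+f)\cdot[e,\mathrm{inr}]\colon X+Y\to H(X+Y)+A$ where $\mathrm{can}=[H\mathrm{inl},H\mathrm{inr}]\colon HX+HY\to H(X+Y)$, one has $(e\oplus f)^\dagger\cdot\mathrm{inl}=(f^\dagger\bullet e)^\dagger$. Morphisms $(A,a,\dagger)\to(B,b,\ddagger)$ of complete Elgot algebras are $h\colon A\to B$ with $h\cdot e^\dagger=(h\bullet e)^\ddagger$ for all $e\colon X\to HX+A$. A Bloom algebra is $(A,a,\dagger)$ with $a\colon HA\to A$ and $\dagger$ assigning to each coalgebra $e\colon X\to HX$ a morphism $e^\dagger\colon X\to A$ with $e^\dagger=a\cdot He^\dagger\cdot e$, such that for every coalgebra morphism $h\colon(X,e)\to(Y,f)$ one has $f^\dagger\cdot h=e^\dagger$. Morphisms of Bloom algebras are $H$-algebra morphisms $h$ with $h\cdot e^\dagger=e^\ddagger$ for all coalgebras $e$. *)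

Record Category : Type := {
  Ob : Type;
  Hom : Ob -> Ob -> Type;
  idm : forall a, Hom a a;
  comp : forall a b c, Hom b c -> Hom a b -> Hom a c }.
Arguments Hom {_} _ _.
Arguments idm {_} _.
Arguments comp {_ _ _ _} _ _.
Notation "g ∘ f" := (comp g f) (at level 40, left associativity).

Definition IsCategory (C : Category) : Prop :=
  (forall (a b : Ob C) (f : Hom a b), idm b ∘ f = f) /\
  (forall (a b : Ob C) (f : Hom a b), f ∘ idm a = f) /\
  (forall (a b c d : Ob C) (f : Hom a b) (g : Hom b c) (h : Hom c d),
      h ∘ (g ∘ f) = (h ∘ g) ∘ f).

Record Functor (C D : Category) : Type := {
  fobj : Ob C -> Ob D;
  fmor : forall a b, Hom a b -> Hom (fobj a) (fobj b) }.
Arguments fobj {C D} _ _.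
Arguments fmor {C D} _ {a b} _.

Definition IsFunctor {C D : Category} (F : Functor C D) : Prop :=
  (forall a, fmor F (idm a) = idm (fobj F a)) /\
  (forall (a b c : Ob C) (f : Hom a b) (g : Hom b c),
      fmor F (g ∘ f) = fmor F g ∘ fmor F f).

Record BinCoprod (C : Category) : Type := {
  cp : Ob C -> Ob C -> Ob C;
  cinl : forall A B, Hom A (cp A B);
  cinr : forall A B, Hom B (cp A B);
  copair : forall A B Z, Hom A Z -> Hom B Z -> Hom (cp A B) Z }.
Arguments cp {C} _ _ _.
Arguments cinl {C} _ {A B}.
Arguments cinr {C} _ {A B}.
Arguments copair {C} _ {A B Z} _ _.

Definition IsBinCoprod {C : Category} (K : BinCoprod C) : Prop :=
  forall (A B Z : Ob C) (f : Hom A Z) (g : Hom B Z),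
    copair K f g ∘ cinl K = f /\ copair K f g ∘ cinr K = g /\
    (forall h : Hom (cp K A B) Z, h ∘ cinl K = f -> h ∘ cinr K = g -> h = copair K f g).

Definition Countable (I : Type) : Prop :=
  exists f : I -> nat, forall x y, f x = f y -> x = y.

Section Limits.
Context {C : Category}.

Definition IsCoproduct {I : Type} (A : I -> Ob C) (P : Ob C)
  (inj : forall i, Hom (A i) P) : Prop :=
  forall (Z : Ob C) (f : forall i, Hom (A i) Z),
    exists! g : Hom P Z, forall i, g ∘ inj i = f i.

Definition HasCountableCoproducts : Prop :=
  forall I : Type, Countable I -> forall A : I -> Ob C,
    exists (P : Ob C) (inj : forall i, Hom (A i) P), IsCoproduct A P inj.

Definition IsInitial (Z : Ob C) : Prop := forall X : Ob C, exists! f : Hom Z X, True.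

Definition IsPullback {A B D : Ob C} (f : Hom A D) (g : Hom B D)
  (P : Ob C) (p1 : Hom P A) (p2 : Hom P B) : Prop :=
  f ∘ p1 = g ∘ p2 /\
  forall (Q : Ob C) (q1 : Hom Q A) (q2 : Hom Q B), f ∘ q1 = g ∘ q2 ->
    exists! u : Hom Q P, p1 ∘ u = q1 /\ p2 ∘ u = q2.

Definition Monic {A B : Ob C} (m : Hom A B) : Prop :=
  forall (Z : Ob C) (x y : Hom Z A), m ∘ x = m ∘ y -> x = y.

Definition IsCoprodInj {A B : Ob C} (m : Hom A B) : Prop :=
  exists (A' : Ob C) (m' : Hom A' B),
    IsCoproduct (fun b : bool => if b then A else A') B
      (fun b : bool => match b as b0 return Hom (if b0 then A else A') B with
                       | true => m | false => m' end).

Definition Disjoint {A1 A2 B : Ob C} (m1 : Hom A1 B) (m2 : Hom A2 B) : Prop :=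
  exists (Q : Ob C) (p1 : Hom Q A1) (p2 : Hom Q A2),
    IsPullback m1 m2 Q p1 p2 /\ IsInitial Q.

Definition HyperExtensive : Prop :=
  HasCountableCoproducts /\
  (forall I : Type, Countable I -> forall (A : I -> Ob C) (P : Ob C)
     (inj : forall i, Hom (A i) P), IsCoproduct A P inj ->
     forall (B : Ob C) (h : Hom B P),
       (forall i, exists (Bi : Ob C) (ri : Hom Bi (A i)) (qi : Hom Bi B),
            IsPullback (inj i) h Bi ri qi) /\
       (forall (Bi : I -> Ob C) (ri : forall i, Hom (Bi i) (A i))
               (qi : forall i, Hom (Bi i) B),
          (forall i, IsPullback (inj i) h (Bi i) (ri i) (qi i)) ->
          IsCoproduct Bi B qi)) /\
  (forall I : Type, Countable I -> forall (A : I -> Ob C) (P : Ob C)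
     (inj : forall i, Hom (A i) P), IsCoproduct A P inj ->
     (forall i, Monic (inj i)) /\
     (forall i j, i <> j -> Disjoint (inj i) (inj j))) /\
  (forall I : Type, Countable I -> forall (A : I -> Ob C) (B : Ob C)
     (m : forall i, Hom (A i) B),
     (forall i, IsCoprodInj (m i)) ->
     (forall i j, i <> j -> Disjoint (m i) (m j)) ->
     forall (P : Ob C) (inj : forall i, Hom (A i) P) (g : Hom P B),
       IsCoproduct A P inj -> (forall i, g ∘ inj i = m i) -> IsCoprodInj g).

End Limits.

Definition PreservesCountableCoproducts {C : Category} (H : Functor C C) : Prop :=
  forall I : Type, Countable I -> forall (A : I -> Ob C) (P : Ob C)
    (inj : forall i, Hom (A i) P), IsCoproduct A P inj ->
    IsCoproduct (fun i => fobj H (A i)) (fobj H P) (fun i => fmor H (inj i)).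

Definition IsTerminalCoalg {C : Category} (H : Functor C C) {nu : Ob C}
  (t : Hom nu (fobj H nu)) : Prop :=
  forall (X : Ob C) (e : Hom X (fobj H X)),
    exists! h : Hom X nu, t ∘ h = fmor H h ∘ e.

(* ---------- Isomorphism of categories of structured objects over C ----------
   Each of the four categories is a category of objects with structure over C,
   whose morphisms are the C-morphisms between carriers satisfying a property,
   with identity and composition those of C. *)

Record ConcreteCat (C : Category) : Type := {
  CO : Type;
  CU : CO -> Ob C;
  CM : forall x y : CO, Hom (CU x) (CU y) -> Prop }.
Arguments CO {C} _.
Arguments CU {C} _ _.
Arguments CM {C} _ {x y} _.

Definition CHom {C : Category} (S : ConcreteCat C) (x y : CO S) : Type :=
  { h : Hom (CU S x) (CU S y) | CM S h }.

Definition Bij {A B : Type} (f : A -> B) : Prop :=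
  exists g : B -> A, (forall x, g (f x) = x) /\ (forall y, f (g y) = y).

Definition CatIso {C : Category} (S1 S2 : ConcreteCat C) : Prop :=
  exists (fo : CO S1 -> CO S2)
         (fm : forall x y, CHom S1 x y -> CHom S2 (fo x) (fo y)),
    Bij fo /\ (forall x y, Bij (fm x y)) /\
    (forall x (i : CHom S1 x x), proj1_sig i = idm (CU S1 x) ->
        proj1_sig (fm x x i) = idm (CU S2 (fo x))) /\
    (forall x y z (f : CHom S1 x y) (g : CHom S1 y z) (gf : CHom S1 x z),
        proj1_sig gf = proj1_sig g ∘ proj1_sig f ->
        proj1_sig (fm x z gf) = proj1_sig (fm y z g) ∘ proj1_sig (fm x y f)).

Section Algebras.
Context {C : Category} (K : BinCoprod C) (H : Functor C C).

Local Notation HO := (fobj H).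
Local Notation HM := (fmor H).
Local Notation "A ⊕ B" := (cp K A B) (at level 50, left associativity).

Definition sum_map {A B A' B' : Ob C} (f : Hom A A') (g : Hom B B')
  : Hom (A ⊕ B) (A' ⊕ B') := copair K (cinl K ∘ f) (cinr K ∘ g).

Definition IsAlgMor {A B : Ob C} (a : Hom (HO A) A) (b : Hom (HO B) B)
  (h : Hom A B) : Prop := h ∘ a = b ∘ HM h.

Definition IsSolution {A X : Ob C} (a : Hom (HO A) A) (e : Hom X (HO X ⊕ A))
  (s : Hom X A) : Prop :=
  s = copair K a (idm A) ∘ sum_map (HM s) (idm A) ∘ e.

Definition Cia {A : Ob C} (a : Hom (HO A) A) : Prop :=
  forall (X : Ob C) (e : Hom X (HO X ⊕ A)), exists! s, IsSolution a e s.

(* a choice of free cias (T Y, tau Y) with universal maps eta Y; ext b f is the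
   unique algebra morphism extending f *)
Record FreeCiaData : Type := {
  FT : Ob C -> Ob C;
  Ftau : forall Y, Hom (HO (FT Y)) (FT Y);
  Feta : forall Y, Hom Y (FT Y);
  Fext : forall (Y B : Ob C), Hom (HO B) B -> Hom Y B -> Hom (FT Y) B }.

Definition IsFreeCia (F : FreeCiaData) : Prop :=
  forall Y : Ob C, Cia (Ftau F Y) /\
    forall (B : Ob C) (b : Hom (HO B) B), Cia b -> forall f : Hom Y B,
      IsAlgMor (Ftau F Y) b (Fext F Y B b f) /\ Fext F Y B b f ∘ Feta F Y = f /\
      (forall g : Hom (FT F Y) B, IsAlgMor (Ftau F Y) b g -> g ∘ Feta F Y = f ->
         g = Fext F Y B b f).

Section Monad.
Variable F : FreeCiaData.
Local Notation T := (FT F).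

Definition Tmap {X Y : Ob C} (f : Hom X Y) : Hom (T X) (T Y) :=
  Fext F X (T Y) (Ftau F Y) (Feta F Y ∘ f).

Definition Tmu (Y : Ob C) : Hom (T (T Y)) (T Y) :=
  Fext F (T Y) (T Y) (Ftau F Y) (idm (T Y)).

Record EMObj : Type := {
  em_car : Ob C;
  em_alg : Hom (T em_car) em_car;
  em_unit : em_alg ∘ Feta F em_car = idm em_car;
  em_assoc : em_alg ∘ Tmu em_car = em_alg ∘ Tmap em_alg }.

Definition EMCat : ConcreteCat C := {|
  CO := EMObj; CU := em_car;
  CM := fun x y h => h ∘ em_alg x = em_alg y ∘ Tmap h |}.
End Monad.

(* (2) the slice category nu H / Alg H, nu H carrying the algebra t^{-1} *)
Section Slice.
Variables (nu : Ob C) (tinv : Hom (HO nu) nu).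

Record SliceObj : Type := {
  sl_car : Ob C;
  sl_alg : Hom (HO sl_car) sl_car;
  sl_map : Hom nu sl_car;
  sl_mor : IsAlgMor tinv sl_alg sl_map }.

Definition SliceCat : ConcreteCat C := {|
  CO := SliceObj; CU := sl_car;
  CM := fun x y f => IsAlgMor (sl_alg x) (sl_alg y) f /\ f ∘ sl_map x = sl_map y |}.
End Slice.

Record BloomObj : Type := {
  bl_car : Ob C;
  bl_alg : Hom (HO bl_car) bl_car;
  bl_dag : forall X : Ob C, Hom X (HO X) -> Hom X bl_car;
  bl_sol : forall (X : Ob C) (e : Hom X (HO X)),
      bl_dag X e = bl_alg ∘ HM (bl_dag X e) ∘ e;
  bl_fun : forall (X Y : Ob C) (e : Hom X (HO X)) (f : Hom Y (HO Y)) (h : Hom X Y),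
      f ∘ h = HM h ∘ e -> bl_dag Y f ∘ h = bl_dag X e }.

Definition BloomCat : ConcreteCat C := {|
  CO := BloomObj; CU := bl_car;
  CM := fun x y h => IsAlgMor (bl_alg x) (bl_alg y) h /\
          forall (X : Ob C) (e : Hom X (HO X)), h ∘ bl_dag x X e = bl_dag y X e |}.

Definition bullet {X Y Z : Ob C} (h : Hom Y Z) (e : Hom X (HO X ⊕ Y))
  : Hom X (HO X ⊕ Z) := sum_map (idm (HO X)) h ∘ e.

Definition can (X Y : Ob C) : Hom (HO X ⊕ HO Y) (HO (X ⊕ Y)) :=
  copair K (HM (cinl K)) (HM (cinr K)).

(* the canonical associativity isomorphism P + (Q + R) -> (P + Q) + R,
   left implicit in the paper's formula for e ⊕ f *)
Definition cp_assoc (P Q R : Ob C) : Hom (P ⊕ (Q ⊕ R)) ((P ⊕ Q) ⊕ R) :=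
  copair K (cinl K ∘ cinl K) (copair K (cinl K ∘ cinr K) (cinr K)).

Definition oplus {X Y A : Ob C} (e : Hom X (HO X ⊕ Y)) (f : Hom Y (HO Y ⊕ A))
  : Hom (X ⊕ Y) (HO (X ⊕ Y) ⊕ A) :=
  sum_map (can X Y) (idm A) ∘ cp_assoc (HO X) (HO Y) A
    ∘ sum_map (idm (HO X)) f ∘ copair K e (cinr K).

Record ElgotObj : Type := {
  el_car : Ob C;
  el_alg : Hom (HO el_car) el_car;
  el_dag : forall X : Ob C, Hom X (HO X ⊕ el_car) -> Hom X el_car;
  el_sol : forall (X : Ob C) (e : Hom X (HO X ⊕ el_car)),
      IsSolution el_alg e (el_dag X e);
  el_fun : forall (X Y : Ob C) (e : Hom X (HO X ⊕ el_car))
             (f : Hom Y (HO Y ⊕ el_car)) (h : Hom X Y),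
      f ∘ h = sum_map (HM h) (idm el_car) ∘ e -> el_dag Y f ∘ h = el_dag X e;
  el_comp : forall (X Y : Ob C) (e : Hom X (HO X ⊕ Y)) (f : Hom Y (HO Y ⊕ el_car)),
      el_dag (X ⊕ Y) (oplus e f) ∘ cinl K = el_dag X (bullet (el_dag Y f) e) }.

Definition ElgotCat : ConcreteCat C := {|
  CO := ElgotObj; CU := el_car;
  CM := fun x y h => forall (X : Ob C) (e : Hom X (HO X ⊕ el_car x)),
          h ∘ el_dag x X e = el_dag y X (bullet h e) |}.

End Algebras.

(* The free cia decomposes as a coproduct
     T Y = (coproduct of the H^n Y) + nu H,
   with injections [iota n : H^n Y -> T Y] and [jnu : nu H -> T Y], the unique
   solution of [inl . t].  The [iota n] are pairwise disjoint coproduct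
   injections (they are separated by [T Y = H (T Y) + Y]), so by coherence their
   copairing has a complement [R]; uniqueness of complements makes [R] a fixed
   point [R = H R], and [jnu] factors through it as an isomorphism.
   Consequently an algebra morphism out of [T Y] is freely and uniquely given by
   its restrictions along [eta] and along [jnu], the latter being any algebra
   morphism out of [(nu H, t^-1)].  An Eilenberg-Moore structure [alpha] on [A]
   is therefore the same as an algebra [a] with an algebra morphism
   [h : nu H -> A]; from [h] one gets the Bloom structure [e |-> h . unfold e]
   and the Elgot structure [e |-> alpha . (solution of eta • e in T A)], and
   conversely [h] is recovered as the solution of [t], resp. of [inl . t]. *)

From Stdlib Require Import ClassicalEpsilon ChoiceFacts FunctionalExtensionality ProofIrrelevance.

Section ElgotAlgebras.
Context (C : Category) (K : BinCoprod C) (H : Functor C C)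
  (hC : IsCategory C) (hK : IsBinCoprod K) (hH : IsFunctor H).

Local Notation HO := (fobj H).
Local Notation HM := (fmor H).
Local Notation "A ⊕ B" := (cp K A B) (at level 50, left associativity).

Lemma id_left {a b : Ob C} (f : Hom a b) : idm b ∘ f = f.
Proof. exact (proj1 hC a b f). Qed.

Lemma id_right {a b : Ob C} (f : Hom a b) : f ∘ idm a = f.
Proof. exact (proj1 (proj2 hC) a b f). Qed.

Lemma comp_assoc {a b c d : Ob C} (h : Hom c d) (g : Hom b c) (f : Hom a b) :
  h ∘ (g ∘ f) = h ∘ g ∘ f.
Proof. exact (proj2 (proj2 hC) a b c d f g h). Qed.

Lemma fmap_id (a : Ob C) : HM (idm a) = idm (HO a).
Proof. exact (proj1 hH a). Qed.

Lemma fmap_comp {a b c : Ob C} (g : Hom b c) (f : Hom a b) : HM (g ∘ f) = HM g ∘ HM f.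
Proof. exact (proj2 hH a b c f g). Qed.

Lemma postcompose_eq {a b c : Ob C} {x : Hom b c} {y : Hom a b} {z : Hom a c} :
  x ∘ y = z -> forall d (P : Hom c d), P ∘ x ∘ y = P ∘ z.
Proof. intros E d P. rewrite <- comp_assoc, E. reflexivity. Qed.

Lemma copair_inl {A B Z : Ob C} (f : Hom A Z) (g : Hom B Z) : copair K f g ∘ cinl K = f.
Proof. apply (hK A B Z f g). Qed.

Lemma copair_inr {A B Z : Ob C} (f : Hom A Z) (g : Hom B Z) : copair K f g ∘ cinr K = g.
Proof. apply (hK A B Z f g). Qed.

Lemma copair_ext {A B Z : Ob C} (h1 h2 : Hom (A ⊕ B) Z) :
  h1 ∘ cinl K = h2 ∘ cinl K -> h1 ∘ cinr K = h2 ∘ cinr K -> h1 = h2.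
Proof.
  intros E1 E2. destruct (hK A B Z (h2 ∘ cinl K) (h2 ∘ cinr K)) as [_ [_ U]].
  rewrite (U h1 E1 E2). symmetry. apply U; reflexivity.
Qed.

Lemma comp_copair {A B Z W : Ob C} (h : Hom Z W) (f : Hom A Z) (g : Hom B Z) :
  h ∘ copair K f g = copair K (h ∘ f) (h ∘ g).
Proof. apply copair_ext; rewrite <- comp_assoc, ?copair_inl, ?copair_inr; reflexivity. Qed.

Lemma copair_inl_inr {A B : Ob C} : copair K (cinl K) (cinr K) = idm (A ⊕ B).
Proof. apply copair_ext; rewrite ?copair_inl, ?copair_inr, id_left; reflexivity. Qed.

Lemma sum_map_inl {A B A' B' : Ob C} (f : Hom A A') (g : Hom B B') :
  sum_map K f g ∘ cinl K = cinl K ∘ f.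
Proof. apply copair_inl. Qed.

Lemma sum_map_inr {A B A' B' : Ob C} (f : Hom A A') (g : Hom B B') :
  sum_map K f g ∘ cinr K = cinr K ∘ g.
Proof. apply copair_inr. Qed.

Lemma copair_sum_map {A B A' B' Z : Ob C} (f : Hom A A') (g : Hom B B')
  (f' : Hom A' Z) (g' : Hom B' Z) :
  copair K f' g' ∘ sum_map K f g = copair K (f' ∘ f) (g' ∘ g).
Proof.
  apply copair_ext; rewrite <- comp_assoc, ?sum_map_inl, ?sum_map_inr, comp_assoc,
    ?copair_inl, ?copair_inr; reflexivity.
Qed.

Lemma sum_map_comp {A B A' B' A'' B'' : Ob C} (f : Hom A A') (g : Hom B B')
  (f' : Hom A' A'') (g' : Hom B' B'') :
  sum_map K f' g' ∘ sum_map K f g = sum_map K (f' ∘ f) (g' ∘ g).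
Proof.
  unfold sum_map at 1. rewrite copair_sum_map. unfold sum_map. rewrite !comp_assoc. reflexivity.
Qed.

Ltac coprod_simpl :=
  repeat progress (rewrite ?comp_assoc;
    rewrite ?copair_inl, ?copair_inr, ?sum_map_inl, ?sum_map_inr, ?copair_sum_map;
    rewrite ?(postcompose_eq (copair_inl _ _)), ?(postcompose_eq (copair_inr _ _)),
      ?(postcompose_eq (sum_map_inl _ _)), ?(postcompose_eq (sum_map_inr _ _)),
      ?(postcompose_eq (copair_sum_map _ _ _ _));
    rewrite ?comp_copair; rewrite ?id_left, ?id_right, ?fmap_id).

Lemma catIso_of_relabelling {S1 S2 : ConcreteCat C} (fo : CO S1 -> CO S2) (go : CO S2 -> CO S1)
  (fm : forall x y, Hom (CU S1 x) (CU S1 y) -> Hom (CU S2 (fo x)) (CU S2 (fo y)))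
  (gm : forall x y, Hom (CU S2 (fo x)) (CU S2 (fo y)) -> Hom (CU S1 x) (CU S1 y)) :
  (forall x, go (fo x) = x) -> (forall y, fo (go y) = y) ->
  (forall x y h, gm x y (fm x y h) = h) -> (forall x y h, fm x y (gm x y h) = h) ->
  (forall x, fm x x (idm _) = idm _) ->
  (forall x y z (f : Hom (CU S1 x) (CU S1 y)) (g : Hom (CU S1 y) (CU S1 z)),
      fm x z (g ∘ f) = fm y z g ∘ fm x y f) ->
  (forall x y h, CM S1 h <-> CM S2 (fm x y h)) ->
  CatIso S1 S2.
Proof.
  intros gfo fgo gfm fgm fm_id fm_comp hM.
  exists fo, (fun x y f => exist _ (fm x y (proj1_sig f)) (proj1 (hM x y _) (proj2_sig f))).
  split; [exists go; auto|]. split; [|split].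
  - intros x y.
    unshelve eexists (fun g => exist _ (gm x y (proj1_sig g)) _).
    { apply hM. rewrite fgm. exact (proj2_sig g). }
    split; intros [h ph]; apply subset_eq_compat; simpl; auto.
  - intros x [i pi] ei. simpl in *. subst. apply fm_id.
  - intros x y z [f pf] [g pg] [gf pgf] e. simpl in *. subst. apply fm_comp.
Qed.

Lemma countable_bool : Countable bool.
Proof. exists (fun b : bool => if b then 0 else 1). intros [] []; simpl; congruence. Qed.

Lemma countable_nat : Countable nat.
Proof. exists (fun n => n). auto. Qed.

Lemma countable_empty : Countable Empty_set.
Proof. exists (fun e : Empty_set => match e with end). intros []. Qed.

(** * Binary sums as a property of a cocone *)

Definition IsSum {A1 A2 B : Ob C} (u1 : Hom A1 B) (u2 : Hom A2 B) : Prop :=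
  (forall Z (f : Hom A1 Z) (g : Hom A2 Z), exists h, h ∘ u1 = f /\ h ∘ u2 = g) /\
  (forall Z (h h' : Hom B Z), h ∘ u1 = h' ∘ u1 -> h ∘ u2 = h' ∘ u2 -> h = h').

Definition bool_cocone {A1 A2 B : Ob C} (u1 : Hom A1 B) (u2 : Hom A2 B) :
  forall b : bool, Hom (if b then A1 else A2) B :=
  fun b => match b as b0 return Hom (if b0 then A1 else A2) B with
           | true => u1 | false => u2 end.

Lemma isSum_coproduct {A1 A2 B : Ob C} (u1 : Hom A1 B) (u2 : Hom A2 B) :
  IsSum u1 u2 <-> IsCoproduct (fun b : bool => if b then A1 else A2) B (bool_cocone u1 u2).
Proof.
  split.
  - intros [E U] Z f. destruct (E Z (f true) (f false)) as [h [h1 h2]].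
    exists h. split; [intros []; assumption|].
    intros h' Hh'. apply U; [rewrite h1 | rewrite h2]; symmetry;
      [apply (Hh' true) | apply (Hh' false)].
  - intros Hc. split.
    + intros Z f g. destruct (Hc Z (bool_cocone f g)) as [h [Hh _]].
      exists h. split; [apply (Hh true) | apply (Hh false)].
    + intros Z h h' E1 E2. destruct (Hc Z (bool_cocone (h ∘ u1) (h ∘ u2))) as [k [_ Uk]].
      transitivity k; [symmetry|]; apply Uk; intros []; simpl; auto.
Qed.

Lemma isCoprodInj_isSum {A B : Ob C} (m : Hom A B) :
  IsCoprodInj m <-> exists A' (m' : Hom A' B), IsSum m m'.
Proof. split; intros [A' [m' Hm]]; exists A', m'; apply isSum_coproduct; exact Hm. Qed.

Lemma isSum_inl_inr (A B : Ob C) : IsSum (@cinl C K A B) (cinr K).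
Proof.
  split.
  - intros Z f g. exists (copair K f g). split; [apply copair_inl | apply copair_inr].
  - intros Z h h'. apply copair_ext.
Qed.

Lemma isSum_sym {A1 A2 B : Ob C} (u1 : Hom A1 B) (u2 : Hom A2 B) : IsSum u1 u2 -> IsSum u2 u1.
Proof.
  intros [E U]. split.
  - intros Z f g. destruct (E Z g f) as [h [h1 h2]]. exists h; auto.
  - intros Z h h' e1 e2. apply U; auto.
Qed.

Lemma isSum_iso_post {A1 A2 B B' : Ob C} (u1 : Hom A1 B) (u2 : Hom A2 B)
  (phi : Hom B B') (psi : Hom B' B) :
  psi ∘ phi = idm B -> phi ∘ psi = idm B' -> IsSum u1 u2 -> IsSum (phi ∘ u1) (phi ∘ u2).
Proof.
  intros e1 e2 [E U]. split.
  - intros Z f g. destruct (E Z f g) as [h [h1 h2]]. exists (h ∘ psi).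
    rewrite !comp_assoc, (postcompose_eq e1), !id_right. auto.
  - intros Z h h' k1 k2. rewrite !comp_assoc in k1. rewrite !comp_assoc in k2.
    rewrite <- (id_right h), <- (id_right h'), <- e2, !comp_assoc. f_equal. apply U; auto.
Qed.

Lemma isSum_iso_pre {A1 A1' A2 B : Ob C} (u1 : Hom A1 B) (u2 : Hom A2 B)
  (phi : Hom A1' A1) (psi : Hom A1 A1') :
  psi ∘ phi = idm A1' -> phi ∘ psi = idm A1 -> IsSum u1 u2 -> IsSum (u1 ∘ phi) u2.
Proof.
  intros e1 e2 [E U]. split.
  - intros Z f g. destruct (E Z (f ∘ psi) g) as [h [h1 h2]]. exists h.
    rewrite comp_assoc, h1, <- comp_assoc, e1, id_right. auto.
  - intros Z h h' k1 k2. apply U; auto. rewrite !comp_assoc in k1.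
    rewrite <- (id_right (h ∘ u1)), <- (id_right (h' ∘ u1)), <- e2, !comp_assoc, k1.
    reflexivity.
Qed.

Lemma isSum_assoc {A1 A2 C1 C2 B : Ob C} (u1 : Hom A1 B) (u2 : Hom A2 B)
  (v1 : Hom C1 A2) (v2 : Hom C2 A2) :
  IsSum u1 u2 -> IsSum v1 v2 -> IsSum (copair K u1 (u2 ∘ v1)) (u2 ∘ v2).
Proof.
  intros [E U] [E' U']. split.
  - intros Z f g.
    destruct (E' Z (f ∘ cinr K) g) as [k [k1 k2]].
    destruct (E Z (f ∘ cinl K) k) as [h [h1 h2]].
    exists h. rewrite comp_copair, comp_assoc, h1, h2, comp_assoc, h2, k1, k2.
    split; [apply copair_ext; rewrite ?copair_inl, ?copair_inr|]; reflexivity.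
  - intros Z h h' e1 e2. rewrite !comp_copair in e1.
    pose proof (f_equal (fun x => x ∘ cinl K) e1) as a1.
    pose proof (f_equal (fun x => x ∘ cinr K) e1) as a2.
    simpl in a1, a2. rewrite !copair_inl in a1. rewrite !copair_inr in a2.
    apply U; auto. apply U'; rewrite <- !comp_assoc; auto.
Qed.

Lemma isSum_assoc_l {A1 A2 C1 C2 B : Ob C} (u1 : Hom A1 B) (u2 : Hom A2 B)
  (v1 : Hom C1 A1) (v2 : Hom C2 A1) :
  IsSum u1 u2 -> IsSum v1 v2 -> IsSum (u1 ∘ v1) (copair K (u1 ∘ v2) u2).
Proof.
  intros h1 h2. apply isSum_sym.
  pose proof (isSum_assoc _ _ _ _ (isSum_sym _ _ h1) (isSum_sym _ _ h2)) as X.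
  set (swap := fun P Q : Ob C => copair K (cinr K) (cinl K) : Hom (P ⊕ Q) (Q ⊕ P)).
  assert (swap_swap : forall P Q, swap Q P ∘ swap P Q = idm _).
  { intros P Q. unfold swap. rewrite comp_copair, copair_inl, copair_inr. apply copair_inl_inr. }
  apply (isSum_iso_pre _ _ (swap _ _) (swap _ _) (swap_swap _ _) (swap_swap _ _)) in X.
  unfold swap in X. rewrite comp_copair, copair_inl, copair_inr in X. exact X.
Qed.

Lemma isSum_fmap {A1 A2 B : Ob C} (u1 : Hom A1 B) (u2 : Hom A2 B) :
  PreservesCountableCoproducts H -> IsSum u1 u2 -> IsSum (HM u1) (HM u2).
Proof.
  intros hp Hb. apply isSum_coproduct in Hb. apply isSum_coproduct.
  intros Z f. destruct (hp bool countable_bool _ B _ Hb Z (fun b =>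
    match b as b0 return Hom (HO (if b0 then A1 else A2)) Z with
    | true => f true | false => f false end)) as [g [Hg Ug]].
  exists g. split.
  - intros []; [apply (Hg true) | apply (Hg false)].
  - intros g' Hg'. apply Ug. intros []; [apply (Hg' true) | apply (Hg' false)].
Qed.

Lemma coproduct_ext {I : Type} {A : I -> Ob C} {P Z : Ob C} {inj : forall i, Hom (A i) P} :
  IsCoproduct A P inj -> forall g1 g2 : Hom P Z, (forall i, g1 ∘ inj i = g2 ∘ inj i) -> g1 = g2.
Proof.
  intros hc g1 g2 E. destruct (hc Z (fun i => g2 ∘ inj i)) as [g [_ U]].
  transitivity g; [symmetry|]; apply U; auto.
Qed.

Lemma coproduct_copair {I : Type} {A : I -> Ob C} {P Z : Ob C} {inj : forall i, Hom (A i) P} :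
  IsCoproduct A P inj -> forall f : forall i, Hom (A i) Z, exists g, forall i, g ∘ inj i = f i.
Proof. intros hc f. destruct (hc Z f) as [g [Hg _]]. eauto. Qed.

(** * Solutions in cias *)

Lemma isSolution_iff {A X : Ob C} (a : Hom (HO A) A) (e : Hom X (HO X ⊕ A)) (s : Hom X A) :
  IsSolution K H a e s <-> s = copair K (a ∘ HM s) (idm A) ∘ e.
Proof. unfold IsSolution. rewrite copair_sum_map, id_left. reflexivity. Qed.

Definition cia_sol {A : Ob C} {a : Hom (HO A) A} (ha : Cia K H a) {X : Ob C}
  (e : Hom X (HO X ⊕ A)) : Hom X A :=
  proj1_sig (constructive_indefinite_description _ (ha X e)).

Section CiaSolutions.
Context {A : Ob C} {a : Hom (HO A) A} (ha : Cia K H a).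

Lemma cia_sol_eq {X : Ob C} (e : Hom X (HO X ⊕ A)) :
  cia_sol ha e = copair K (a ∘ HM (cia_sol ha e)) (idm A) ∘ e.
Proof.
  apply isSolution_iff. exact (proj1 (proj2_sig (constructive_indefinite_description _ (ha X e)))).
Qed.

Lemma cia_sol_unique {X : Ob C} (e : Hom X (HO X ⊕ A)) (s : Hom X A) :
  s = copair K (a ∘ HM s) (idm A) ∘ e -> s = cia_sol ha e.
Proof.
  intros hs. symmetry.
  apply (proj2 (proj2_sig (constructive_indefinite_description _ (ha X e)))), isSolution_iff, hs.
Qed.

Lemma cia_solutions_eq {X : Ob C} (e : Hom X (HO X ⊕ A)) (s s' : Hom X A) :
  s = copair K (a ∘ HM s) (idm A) ∘ e -> s' = copair K (a ∘ HM s') (idm A) ∘ e -> s = s'.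
Proof. intros h1 h2. rewrite (cia_sol_unique e s h1), (cia_sol_unique e s' h2). reflexivity. Qed.

(* Solutions of [e] in the new algebra are determined by the solution of
   [(HX + [a, y]) . e] in [a]. *)
Lemma cia_on_sum {Y : Ob C} (y : Hom Y A) : Cia K H (cinl K ∘ HM (copair K a y)).
Proof.
  set (i := copair K a y). intros X e.
  set (u := cia_sol ha (sum_map K (idm _) i ∘ e)).
  assert (hu : u = copair K (a ∘ HM u) i ∘ e).
  { unfold u at 1. rewrite cia_sol_eq, comp_assoc, copair_sum_map, id_right, id_left. reflexivity. }
  clearbody u.
  assert (i_sol : forall s, s = copair K (cinl K ∘ HM i ∘ HM s) (idm _) ∘ e -> i ∘ s = u).
  { intros s hs. apply (cia_solutions_eq (sum_map K (idm _) i ∘ e)).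
    - rewrite hs at 1. unfold i. coprod_simpl. rewrite fmap_comp, comp_assoc. reflexivity.
    - rewrite comp_assoc, copair_sum_map, id_right, id_left. exact hu. }
  exists (copair K (cinl K ∘ HM u) (idm _) ∘ e). split.
  - apply isSolution_iff. rewrite <- comp_assoc, <- fmap_comp. do 4 f_equal.
    rewrite hu at 1. unfold i. coprod_simpl. reflexivity.
  - intros s hs. apply isSolution_iff in hs.
    rewrite hs, <- comp_assoc, <- fmap_comp, (i_sol s); [reflexivity|].
    rewrite hs at 1. rewrite <- comp_assoc, <- fmap_comp. reflexivity.
Qed.

End CiaSolutions.

Lemma cia_sol_hom {A B X : Ob C} {a : Hom (HO A) A} {b : Hom (HO B) B}
  (ha : Cia K H a) (hb : Cia K H b) (phi : Hom A B) (e : Hom X (HO X ⊕ A)) :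
  phi ∘ a = b ∘ HM phi -> phi ∘ cia_sol ha e = cia_sol hb (sum_map K (idm _) phi ∘ e).
Proof.
  intros E. apply cia_sol_unique.
  rewrite (cia_sol_eq ha e) at 1. rewrite comp_assoc, comp_copair, comp_assoc, E, id_right.
  rewrite comp_assoc, copair_sum_map, id_right, id_left, <- comp_assoc, <- fmap_comp.
  reflexivity.
Qed.

(** * Consequences of hyper-extensivity *)

Lemma initial_hom_unique {Z X : Ob C} (hZ : IsInitial Z) (f g : Hom Z X) : f = g.
Proof. destruct (hZ X) as [k [_ U]]. rewrite <- (U f I), <- (U g I). reflexivity. Qed.

Definition empty_family (e : Empty_set) : Ob C := match e with end.

Lemma initial_empty_coproduct (Z : Ob C) :
  IsInitial Z <-> IsCoproduct empty_family Z (fun e => match e with end).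
Proof.
  split.
  - intros hZ X f. destruct (hZ X) as [k [_ U]]. exists k. split; [intros []|].
    intros; apply U; auto.
  - intros hc X. destruct (hc X (fun e => match e with end)) as [k [_ U]].
    exists k. split; auto. intros; apply U; intros [].
Qed.

Lemma coproduct_of_initial {I : Type} (A : I -> Ob C) (P : Ob C) (inj : forall i, Hom (A i) P) :
  IsCoproduct A P inj -> (forall i, IsInitial (A i)) -> IsInitial P.
Proof.
  intros hc hi X.
  destruct (non_dep_dep_functional_choice choice (fun i => Hom (A i) X) (fun _ _ => True))
    as [f _].
  { intros i. destruct (hi i X) as [k _]. exists k; auto. }
  destruct (hc X f) as [g [_ U]]. exists g. split; auto.
  intros g' _. apply U; intros i; apply initial_hom_unique, hi.
Qed.

Lemma isSum_initial_iso {A1 A2 B : Ob C} (u1 : Hom A1 B) (u2 : Hom A2 B) :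
  IsSum u1 u2 -> IsInitial A1 -> exists psi : Hom B A2, psi ∘ u2 = idm A2 /\ u2 ∘ psi = idm B.
Proof.
  intros [E U] hA. destruct (hA A2) as [z _].
  destruct (E A2 z (idm A2)) as [psi [p1 p2]]. exists psi. split; auto.
  apply U.
  - apply initial_hom_unique, hA.
  - rewrite <- comp_assoc, p2, id_right, id_left. reflexivity.
Qed.

Lemma disjoint_sym {A1 A2 B : Ob C} (u : Hom A1 B) (v : Hom A2 B) :
  Disjoint u v -> Disjoint v u.
Proof.
  intros [Q [p1 [p2 [[e pb] hQ]]]]. exists Q, p2, p1. split; [split|exact hQ].
  - symmetry. exact e.
  - intros Q' q1 q2 e'. destruct (pb Q' q2 q1 (eq_sym e')) as [w [[w1 w2] Uw]].
    exists w. split; [auto|]. intros w' [w1' w2']. apply Uw. auto.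
Qed.

Section HyperExtensive.
Context (hext : @HyperExtensive C).

Lemma exists_initial : exists Z0 : Ob C, IsInitial Z0.
Proof.
  destruct hext as [hcc _]. destruct (hcc Empty_set countable_empty empty_family) as [P [inj hP]].
  exists P. apply initial_empty_coproduct.
  intros X f. destruct (hP X f) as [k [_ U]]. exists k. split; [intros []|].
  intros; apply U; intros [].
Qed.

(* Universality of the empty coproduct. *)
Lemma initial_strict {Z Z0 : Ob C} (f : Hom Z Z0) : IsInitial Z0 -> IsInitial Z.
Proof.
  intros h0. destruct hext as [_ [huniv _]]. apply initial_empty_coproduct in h0.
  destruct (huniv Empty_set countable_empty empty_family Z0 _ h0 Z f) as [_ hpb].
  apply initial_empty_coproduct, (hpb empty_family (fun e => match e with end)).
  intros [].
Qed.

Lemma isSum_cone_initial {A1 A2 B Z : Ob C} (u1 : Hom A1 B) (u2 : Hom A2 B)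
  (z1 : Hom Z A1) (z2 : Hom Z A2) :
  IsSum u1 u2 -> u1 ∘ z1 = u2 ∘ z2 -> IsInitial Z.
Proof.
  intros hb e. apply isSum_coproduct in hb. destruct hext as [_ [_ [hd _]]].
  destruct (proj2 (hd bool countable_bool _ B _ hb) true false ltac:(discriminate))
    as [Q [p1 [p2 [[_ pb] hQ]]]].
  destruct (pb Z z1 z2 e) as [w _]. exact (initial_strict w hQ).
Qed.

Lemma isSum_monic {A1 A2 B : Ob C} (u1 : Hom A1 B) (u2 : Hom A2 B) :
  IsSum u1 u2 -> Monic u1 /\ Monic u2.
Proof.
  intros hb. apply isSum_coproduct in hb. destruct hext as [_ [_ [hd _]]].
  destruct (hd bool countable_bool _ B _ hb) as [hm _]. exact (conj (hm true) (hm false)).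
Qed.

Lemma disjoint_of_cones_initial {A1 A2 B : Ob C} (u : Hom A1 B) (v : Hom A2 B) :
  (forall Z (z1 : Hom Z A1) (z2 : Hom Z A2), u ∘ z1 = v ∘ z2 -> IsInitial Z) -> Disjoint u v.
Proof.
  intros h. destruct exists_initial as [Z0 h0].
  destruct (h0 A1) as [p1 _]. destruct (h0 A2) as [p2 _].
  exists Z0, p1, p2. split; [split|exact h0].
  - apply initial_hom_unique, h0.
  - intros Q q1 q2 e. destruct (h Q q1 q2 e Z0) as [w _].
    exists w. split; [split|]; intros; apply initial_hom_unique, (h Q q1 q2 e).
Qed.

Lemma isSum_pullback {A1 A2 B X : Ob C} (u1 : Hom A1 B) (u2 : Hom A2 B) (h : Hom X B) :
  IsSum u1 u2 ->
  exists P1 P2 (p1 : Hom P1 A1) (x1 : Hom P1 X) (p2 : Hom P2 A2) (x2 : Hom P2 X),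
    u1 ∘ p1 = h ∘ x1 /\ u2 ∘ p2 = h ∘ x2 /\ IsSum x1 x2.
Proof.
  intros hb. apply isSum_coproduct in hb. destruct hext as [_ [huniv _]].
  destruct (huniv bool countable_bool _ B _ hb X h) as [hex hsum].
  destruct (hex true) as [P1 [p1 [x1 pb1]]]. destruct (hex false) as [P2 [p2 [x2 pb2]]].
  exists P1, P2, p1, x1, p2, x2. split; [apply pb1|]. split; [apply pb2|].
  apply isSum_coproduct, (hsum (fun b : bool => if b then P1 else P2)
    (fun b => match b as b0 return Hom (if b0 then P1 else P2) (if b0 then A1 else A2) with
              | true => p1 | false => p2 end)).
  intros []; assumption.
Qed.

Lemma coproduct_pullback {I : Type} (cI : Countable I) (A : I -> Ob C) (P : Ob C)
  (inj : forall i, Hom (A i) P) {X : Ob C} (h : Hom X P) :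
  IsCoproduct A P inj ->
  exists (B : I -> Ob C) (r : forall i, Hom (B i) (A i)) (q : forall i, Hom (B i) X),
    (forall i, inj i ∘ r i = h ∘ q i) /\ IsCoproduct B X q.
Proof.
  intros hc. destruct hext as [_ [huniv _]].
  destruct (huniv I cI A P inj hc X h) as [hex hsum].
  destruct (non_dep_dep_functional_choice choice
     (fun i => {B : Ob C & (Hom B (A i) * Hom B X)%type})
     (fun i x => IsPullback (inj i) h (projT1 x) (fst (projT2 x)) (snd (projT2 x)))) as [f hf].
  { intros i. destruct (hex i) as [B [r [q pb]]]. exists (existT _ B (r, q)). exact pb. }
  exists (fun i => projT1 (f i)), (fun i => fst (projT2 (f i))), (fun i => snd (projT2 (f i))).
  split; [intros i; apply (hf i)|]. exact (hsum _ _ _ hf).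
Qed.

(* Pulling [m + s'] back along [s] splits [S] into a part over [m], initial by
   disjointness of [m] and [s], and a part over [s']. *)
Lemma isSum_complement_unique {A R R' B : Ob C} (m : Hom A B) (r : Hom R B) (r' : Hom R' B) :
  IsSum m r -> IsSum m r' ->
  exists (c : Hom R R') (d : Hom R' R),
    r' ∘ c = r /\ r ∘ d = r' /\ d ∘ c = idm R /\ c ∘ d = idm R'.
Proof.
  intros h1 h2.
  assert (half : forall S S' (s : Hom S B) (s' : Hom S' B), IsSum m s -> IsSum m s' ->
            exists c : Hom S S', s' ∘ c = s).
  { clear r r' h1 h2. intros S S' s s' h1 h2.
    destruct (isSum_pullback m s' s h2) as [P1 [P2 [p1 [x1 [p2 [x2 [e1 [e2 hb]]]]]]]].
    destruct (isSum_initial_iso _ _ hb (isSum_cone_initial _ _ p1 x1 h1 e1)) as [psi [_ q2]].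
    exists (p2 ∘ psi). rewrite comp_assoc, e2, <- comp_assoc, q2, id_right. reflexivity. }
  destruct (half _ _ r r' h1 h2) as [c hc]. destruct (half _ _ r' r h2 h1) as [d hd].
  exists c, d. split; auto. split; auto.
  destruct (isSum_monic _ _ h1) as [_ mr]. destruct (isSum_monic _ _ h2) as [_ mr'].
  split; [apply mr | apply mr']; rewrite comp_assoc, ?hc, ?hd, ?hc, id_right; reflexivity.
Qed.

Definition Separated {A1 A2 B : Ob C} (u : Hom A1 B) (v : Hom A2 B) : Prop :=
  exists C' (c : Hom C' B) (f : Hom A2 C'), IsSum u c /\ v = c ∘ f.

Lemma separated_cone_initial {A1 A2 B Z : Ob C} (u : Hom A1 B) (v : Hom A2 B)
  (z1 : Hom Z A1) (z2 : Hom Z A2) :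
  Separated u v -> u ∘ z1 = v ∘ z2 -> IsInitial Z.
Proof.
  intros [C' [c [f [hb ->]]]] e. apply (isSum_cone_initial _ _ z1 (f ∘ z2) hb).
  rewrite e, comp_assoc. reflexivity.
Qed.

Lemma separated_comp {A1 A2 A3 B : Ob C} (u : Hom A1 B) (v : Hom A2 B) (g : Hom A3 A2) :
  Separated u v -> Separated u (v ∘ g).
Proof.
  intros [C' [c [f [hb ->]]]]. exists C', c, (f ∘ g). split; auto. symmetry; apply comp_assoc.
Qed.

Context (hpres : PreservesCountableCoproducts H).

(** * Free cias *)

Section FreeCia.
Context (F : FreeCiaData H) (hF : IsFreeCia K H F).
Local Notation T := (FT H F).
Local Notation tau := (Ftau H F).
Local Notation eta := (Feta H F).

Lemma free_cia (Y : Ob C) : Cia K H (tau Y).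
Proof. exact (proj1 (hF Y)). Qed.

Section Extension.
Context {Y B : Ob C} {b : Hom (HO B) B} (hb : Cia K H b).

Lemma ext_hom (f : Hom Y B) : Fext H F Y B b f ∘ tau Y = b ∘ HM (Fext H F Y B b f).
Proof. exact (proj1 (proj2 (hF Y) B b hb f)). Qed.

Lemma ext_eta (f : Hom Y B) : Fext H F Y B b f ∘ eta Y = f.
Proof. exact (proj1 (proj2 (proj2 (hF Y) B b hb f))). Qed.

Lemma ext_unique (f : Hom Y B) (g : Hom (T Y) B) :
  g ∘ tau Y = b ∘ HM g -> g ∘ eta Y = f -> g = Fext H F Y B b f.
Proof. exact (proj2 (proj2 (proj2 (hF Y) B b hb f)) g). Qed.

Lemma free_hom_ext (g g' : Hom (T Y) B) :
  g ∘ tau Y = b ∘ HM g -> g' ∘ tau Y = b ∘ HM g' -> g ∘ eta Y = g' ∘ eta Y -> g = g'.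
Proof.
  intros h1 h2 h3. rewrite (ext_unique (g' ∘ eta Y) g h1 h3). symmetry. apply ext_unique; auto.
Qed.

End Extension.

Lemma tmap_hom {X Y : Ob C} (f : Hom X Y) : Tmap H F f ∘ tau X = tau Y ∘ HM (Tmap H F f).
Proof. apply ext_hom, free_cia. Qed.

Lemma tmap_eta {X Y : Ob C} (f : Hom X Y) : Tmap H F f ∘ eta X = eta Y ∘ f.
Proof. apply ext_eta, free_cia. Qed.

Lemma tmu_hom (Y : Ob C) : Tmu H F Y ∘ tau (T Y) = tau Y ∘ HM (Tmu H F Y).
Proof. apply ext_hom, free_cia. Qed.

Lemma tmu_eta (Y : Ob C) : Tmu H F Y ∘ eta (T Y) = idm (T Y).
Proof. apply ext_eta, free_cia. Qed.

(* The inverse of [[tau, eta]] is the extension of [inr] into the cia of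
   [cia_on_sum]. *)
Lemma isSum_tau_eta (Y : Ob C) : IsSum (tau Y) (eta Y).
Proof.
  pose proof (cia_on_sum (free_cia Y) (eta Y)) as hb.
  set (i := copair K (tau Y) (eta Y)) in hb.
  assert (il : i ∘ cinl K = tau Y) by apply copair_inl.
  assert (ir : i ∘ cinr K = eta Y) by apply copair_inr.
  clearbody i.
  set (k := Fext H F Y _ (cinl K ∘ HM i) (cinr K)).
  pose proof (ext_hom hb (cinr K)) as k_hom. pose proof (ext_eta hb (cinr K)) as k_eta.
  fold k in k_hom, k_eta. clearbody k.
  assert (ik : i ∘ k = idm (T Y)).
  { apply (free_hom_ext (free_cia Y)).
    - rewrite <- comp_assoc, k_hom, !comp_assoc, il, <- comp_assoc, <- fmap_comp. reflexivity.
    - rewrite id_left, fmap_id, id_right. reflexivity.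
    - rewrite <- comp_assoc, k_eta, ir, id_left. reflexivity. }
  assert (ki : k ∘ i = idm _).
  { apply copair_ext; rewrite <- comp_assoc, ?il, ?ir, id_left.
    - rewrite k_hom, <- comp_assoc, <- fmap_comp, ik, fmap_id, id_right. reflexivity.
    - exact k_eta. }
  pose proof (isSum_iso_post _ _ i k ki ik (isSum_inl_inr _ _)) as hs.
  rewrite il, ir in hs. exact hs.
Qed.

Fixpoint iterH (n : nat) (X : Ob C) : Ob C :=
  match n with 0 => X | S n => HO (iterH n X) end.

Fixpoint iota (Y : Ob C) (k : nat) : Hom (iterH k Y) (T Y) :=
  match k as k0 return Hom (iterH k0 Y) (T Y) with
  | 0 => eta Y
  | S k => tau Y ∘ HM (iota Y k) end.

Lemma separated_step {Y A1 A2 : Ob C} (u : Hom A1 (T Y)) (v : Hom A2 (T Y)) :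
  Separated u v -> Separated (tau Y ∘ HM u) (tau Y ∘ HM v).
Proof.
  intros [C' [c [f [hb ->]]]].
  exists (HO C' ⊕ Y), (copair K (tau Y ∘ HM c) (eta Y)), (cinl K ∘ HM f). split.
  - exact (isSum_assoc_l _ _ _ _ (isSum_tau_eta Y) (isSum_fmap _ _ hpres hb)).
  - rewrite comp_assoc, copair_inl, fmap_comp, comp_assoc. reflexivity.
Qed.

Lemma separated_iota_lt (Y : Ob C) : forall k l, k < l -> Separated (iota Y k) (iota Y l).
Proof.
  induction k as [|k IH]; intros [|l] hl; try (exfalso; inversion hl; fail).
  - exists (HO (T Y)), (tau Y), (HM (iota Y l)). split; auto. apply isSum_sym, isSum_tau_eta.
  - apply separated_step, IH, le_S_n, hl.
Qed.

Lemma iota_copair_coprodInj {Y Q : Ob C} {q : forall k, Hom (iterH k Y) Q} {m : Hom Q (T Y)} :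
  IsCoproduct (fun k => iterH k Y) Q q -> (forall k, m ∘ q k = iota Y k) -> IsCoprodInj m.
Proof.
  intros hQ hm. destruct hext as [_ [_ [_ hcoh]]].
  apply (hcoh nat countable_nat _ _ (iota Y)) with (P := Q) (inj := q); auto.
  - intros k. destruct (separated_iota_lt Y k (S k) (le_n _)) as [C' [c [_ [hb _]]]].
    apply isCoprodInj_isSum. eauto.
  - intros k l hkl. destruct (PeanoNat.Nat.lt_total k l) as [hl|[hl|hl]]; [| contradiction |].
    + apply disjoint_of_cones_initial. intros Z z1 z2.
      apply separated_cone_initial, separated_iota_lt, hl.
    + apply disjoint_sym, disjoint_of_cones_initial. intros Z z1 z2.
      apply separated_cone_initial, separated_iota_lt, hl.
Qed.

Lemma iterH_coproduct_unfold {Y Q : Ob C} {q : forall k, Hom (iterH k Y) Q} :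
  IsCoproduct (fun k => iterH k Y) Q q ->
  exists (sg : Hom (Y ⊕ HO Q) Q) (sgi : Hom Q (Y ⊕ HO Q)),
    sg ∘ sgi = idm Q /\ sgi ∘ sg = idm _ /\
    sg ∘ cinl K = q 0 /\ (forall k, sg ∘ cinr K ∘ HM (q k) = q (S k)).
Proof.
  intros hQ. pose proof (hpres nat countable_nat _ Q q hQ) as hHQ. simpl in hHQ.
  destruct (coproduct_copair hHQ (fun k => q (S k))) as [sg' hsg'].
  destruct (coproduct_copair hQ (fun k => match k as k0 return Hom (iterH k0 Y) (Y ⊕ HO Q) with
              | 0 => cinl K | S k => cinr K ∘ HM (q k) end)) as [sgi hsgi].
  exists (copair K (q 0) sg'), sgi. split; [|split; [|split]].
  - apply (coproduct_ext hQ). intros [|k]; rewrite <- comp_assoc, hsgi, id_left.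
    + apply copair_inl.
    + rewrite comp_assoc, copair_inr. apply hsg'.
  - apply copair_ext; rewrite <- comp_assoc, ?copair_inl, ?copair_inr, id_left.
    + apply (hsgi 0).
    + apply (coproduct_ext hHQ). intro k. rewrite <- comp_assoc, hsg'. apply (hsgi (S k)).
  - apply copair_inl.
  - intros k. rewrite copair_inr. apply hsg'.
Qed.

(* Via [Q = Y + H Q] and [T Y = Y + H (T Y) = Y + H Q + H R], the complement
   [r] of [m] yields the complement [tau . H r]. *)
Lemma iota_complement_step {Y Q R : Ob C} {q : forall k, Hom (iterH k Y) Q}
  {m : Hom Q (T Y)} {r : Hom R (T Y)} :
  IsCoproduct (fun k => iterH k Y) Q q -> (forall k, m ∘ q k = iota Y k) ->
  IsSum m r -> IsSum m (tau Y ∘ HM r).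
Proof.
  intros hQ hm hmr.
  destruct (iterH_coproduct_unfold hQ) as [sg [sgi [e1 [e2 [e3 e4]]]]].
  pose proof (hpres nat countable_nat _ Q q hQ) as hHQ. simpl in hHQ.
  assert (msg : m ∘ sg = copair K (eta Y) (tau Y ∘ HM m)).
  { apply copair_ext; rewrite <- comp_assoc, ?copair_inl, ?copair_inr, ?e3; [apply (hm 0)|].
    apply (coproduct_ext hHQ). intro k.
    rewrite <- !comp_assoc, (comp_assoc sg), e4, <- fmap_comp, hm. exact (hm (S k)). }
  pose proof (isSum_assoc _ _ _ _ (isSum_sym _ _ (isSum_tau_eta Y)) (isSum_fmap _ _ hpres hmr))
    as hs.
  rewrite <- msg in hs. apply (isSum_iso_pre _ _ sgi sg e1 e2) in hs.
  rewrite <- comp_assoc, e1, id_right in hs. exact hs.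
Qed.

Fixpoint iter_fold {Y A : Ob C} (a : Hom (HO A) A) (f : Hom Y A) (k : nat) :
  Hom (iterH k Y) A :=
  match k as k0 return Hom (iterH k0 Y) A with
  | 0 => f
  | S k => a ∘ HM (iter_fold a f k) end.

Lemma hom_iota {Y A : Ob C} (a : Hom (HO A) A) (g : Hom (T Y) A) :
  g ∘ tau Y = a ∘ HM g -> forall k, g ∘ iota Y k = iter_fold a (g ∘ eta Y) k.
Proof.
  intros hg. induction k as [|k IH]; [reflexivity|].
  simpl. rewrite comp_assoc, hg, <- comp_assoc, <- fmap_comp, IH. reflexivity.
Qed.

Lemma oplus_inl {X Y A Z : Ob C} (e : Hom X (HO X ⊕ Y)) (f : Hom Y (HO Y ⊕ A))
  (P : Hom (HO (X ⊕ Y)) Z) (Q : Hom A Z) :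
  copair K P Q ∘ oplus K H e f ∘ cinl K =
  copair K (P ∘ HM (cinl K)) (copair K (P ∘ HM (cinr K)) Q ∘ f) ∘ e.
Proof. unfold oplus, cp_assoc, can. coprod_simpl. reflexivity. Qed.

Lemma oplus_inr {X Y A : Ob C} (e : Hom X (HO X ⊕ Y)) (f : Hom Y (HO Y ⊕ A)) :
  oplus K H e f ∘ cinr K = sum_map K (HM (cinr K)) (idm A) ∘ f.
Proof.
  rewrite <- (id_left (oplus K H e f)), <- copair_inl_inr.
  unfold oplus, cp_assoc, can, sum_map at 3. coprod_simpl. reflexivity.
Qed.

Definition free_sol (A : Ob C) {X : Ob C} (e : Hom X (HO X ⊕ A)) : Hom X (T A) :=
  cia_sol (free_cia A) (bullet K H (eta A) e).

Lemma free_sol_eq (A : Ob C) {X : Ob C} (e : Hom X (HO X ⊕ A)) :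
  free_sol A e = copair K (tau A ∘ HM (free_sol A e)) (eta A) ∘ e.
Proof. unfold free_sol at 1. rewrite cia_sol_eq. unfold bullet. coprod_simpl. reflexivity. Qed.

Lemma free_sol_unique (A : Ob C) {X : Ob C} (e : Hom X (HO X ⊕ A)) (s : Hom X (T A)) :
  s = copair K (tau A ∘ HM s) (eta A) ∘ e -> s = free_sol A e.
Proof. intros E. apply cia_sol_unique. unfold bullet. coprod_simpl. exact E. Qed.

Lemma free_sol_natural (A : Ob C) {X Y : Ob C} (e : Hom X (HO X ⊕ A))
  (f : Hom Y (HO Y ⊕ A)) (k : Hom X Y) :
  f ∘ k = sum_map K (HM k) (idm A) ∘ e -> free_sol A f ∘ k = free_sol A e.
Proof.
  intros E. apply free_sol_unique. rewrite (free_sol_eq A f) at 1.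
  rewrite <- comp_assoc, E. coprod_simpl. rewrite fmap_comp, comp_assoc. reflexivity.
Qed.

Lemma free_sol_hom {A B X : Ob C} {b : Hom (HO B) B} (hb : Cia K H b) (phi : Hom (T A) B)
  (e : Hom X (HO X ⊕ A)) :
  phi ∘ tau A = b ∘ HM phi ->
  phi ∘ free_sol A e = cia_sol hb (sum_map K (idm _) (phi ∘ eta A) ∘ e).
Proof.
  intros E. unfold free_sol. rewrite (cia_sol_hom (free_cia A) hb phi _ E).
  unfold bullet. rewrite comp_assoc, sum_map_comp, id_left. reflexivity.
Qed.

Lemma free_sol_bullet {Y A X : Ob C} (g : Hom Y A) (e : Hom X (HO X ⊕ Y)) :
  free_sol A (bullet K H g e) = Tmap H F g ∘ free_sol Y e.
Proof.
  rewrite (free_sol_hom (free_cia A) (Tmap H F g) e (tmap_hom g)), tmap_eta.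
  unfold free_sol, bullet. rewrite comp_assoc, sum_map_comp, id_left. reflexivity.
Qed.

Lemma free_sol_oplus_inl {X Y A : Ob C} (e : Hom X (HO X ⊕ Y)) (f : Hom Y (HO Y ⊕ A)) :
  free_sol A (oplus K H e f) ∘ cinl K = Fext H F Y (T A) (tau A) (free_sol A f) ∘ free_sol Y e.
Proof.
  pose proof (ext_hom (free_cia A) (free_sol A f)) as g_hom.
  pose proof (ext_eta (free_cia A) (free_sol A f)) as g_eta.
  set (g := Fext H F Y (T A) (tau A) (free_sol A f)) in *. clearbody g.
  assert (w_inr : free_sol A (oplus K H e f) ∘ cinr K = free_sol A f).
  { apply free_sol_natural, oplus_inr. }
  rewrite (free_sol_hom (free_cia A) g e g_hom), g_eta.
  apply cia_sol_unique. rewrite (free_sol_eq A (oplus K H e f)) at 1. rewrite oplus_inl.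
  rewrite <- !(comp_assoc (tau A)), <- !fmap_comp, w_inr, <- (free_sol_eq A f).
  coprod_simpl. reflexivity.
Qed.

(** * The free cia as a sum of the [H^n Y] and [nu H] *)

Section TerminalCoalgebra.
Context (nu : Ob C) (t : Hom nu (HO nu)) (hterm : IsTerminalCoalg H t)
  (tinv : Hom (HO nu) nu) (htinv : tinv ∘ t = idm nu /\ t ∘ tinv = idm (HO nu)).

Lemma terminal_hom_unique {X : Ob C} (e : Hom X (HO X)) (h1 h2 : Hom X nu) :
  t ∘ h1 = HM h1 ∘ e -> t ∘ h2 = HM h2 ∘ e -> h1 = h2.
Proof.
  intros e1 e2. destruct (hterm X e) as [h [_ U]]. rewrite <- (U h1 e1), <- (U h2 e2).
  reflexivity.
Qed.

Definition jnu (Y : Ob C) : Hom nu (T Y) := cia_sol (free_cia Y) (cinl K ∘ t).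

Lemma jnu_eq (Y : Ob C) : jnu Y = tau Y ∘ HM (jnu Y) ∘ t.
Proof. unfold jnu at 1. rewrite cia_sol_eq, comp_assoc, copair_inl. reflexivity. Qed.

Lemma jnu_hom (Y : Ob C) : jnu Y ∘ tinv = tau Y ∘ HM (jnu Y).
Proof.
  rewrite (jnu_eq Y) at 1. rewrite <- comp_assoc, (proj2 htinv), id_right. reflexivity.
Qed.

Lemma hom_from_nu_unique {B : Ob C} {b : Hom (HO B) B} (hb : Cia K H b) (g1 g2 : Hom nu B) :
  g1 ∘ tinv = b ∘ HM g1 -> g2 ∘ tinv = b ∘ HM g2 -> g1 = g2.
Proof.
  intros e1 e2. apply (cia_solutions_eq hb (cinl K ∘ t));
    rewrite comp_assoc, copair_inl, <- ?e1, <- ?e2, <- comp_assoc, (proj1 htinv), id_right;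
    reflexivity.
Qed.

Lemma hom_jnu {Y Y' : Ob C} (phi : Hom (T Y) (T Y')) :
  phi ∘ tau Y = tau Y' ∘ HM phi -> phi ∘ jnu Y = jnu Y'.
Proof.
  intros E. apply (hom_from_nu_unique (free_cia Y')); [|apply jnu_hom].
  rewrite <- comp_assoc, jnu_hom, comp_assoc, E, <- comp_assoc, <- fmap_comp. reflexivity.
Qed.

Lemma separated_iota_jnu (Y : Ob C) : forall k, Separated (iota Y k) (jnu Y).
Proof.
  induction k as [|k IH].
  - exists (HO (T Y)), (tau Y), (HM (jnu Y) ∘ t). split.
    + apply isSum_sym, isSum_tau_eta.
    + rewrite comp_assoc. apply jnu_eq.
  - simpl. rewrite (jnu_eq Y). apply separated_comp, separated_step, IH.
Qed.

(* Pulling [m + r] back along [jnu], the part over [m] is initial since [jnu]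
   is separated from every [iota k]. *)
Lemma jnu_factors_through_complement {Y Q R : Ob C} {q : forall k, Hom (iterH k Y) Q}
  {m : Hom Q (T Y)} {r : Hom R (T Y)} :
  IsCoproduct (fun k => iterH k Y) Q q -> (forall k, m ∘ q k = iota Y k) ->
  IsSum m r -> exists j' : Hom nu R, r ∘ j' = jnu Y.
Proof.
  intros hQ hm hmr.
  destruct (isSum_pullback m r (jnu Y) hmr) as [P1 [P2 [p1 [x1 [p2 [x2 [ex1 [ex2 hx]]]]]]]].
  assert (iP1 : IsInitial P1).
  { destruct (coproduct_pullback countable_nat _ Q q p1 hQ) as [B [rb [qb [eqb hqb]]]].
    apply (coproduct_of_initial _ _ _ hqb). intro k.
    apply (separated_cone_initial _ _ (rb k) (x1 ∘ qb k) (separated_iota_jnu Y k)).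
    rewrite <- (hm k), <- comp_assoc, eqb, comp_assoc, ex1, comp_assoc. reflexivity. }
  destruct (isSum_initial_iso _ _ hx iP1) as [psi [_ epsi]].
  exists (p2 ∘ psi). rewrite comp_assoc, ex2, <- comp_assoc, epsi, id_right. reflexivity.
Qed.

(* Uniqueness of complements makes [R] a fixed point [c : R ~ HR] with
   [r = jnu . unfold c]; the factorisation of [jnu] through [r] inverts [unfold c]. *)
Lemma iota_complement_iso_nu {Y Q R : Ob C} {q : forall k, Hom (iterH k Y) Q}
  {m : Hom Q (T Y)} {r : Hom R (T Y)} :
  IsCoproduct (fun k => iterH k Y) Q q -> (forall k, m ∘ q k = iota Y k) -> IsSum m r ->
  exists (j' : Hom nu R) (u : Hom R nu), r ∘ j' = jnu Y /\ u ∘ j' = idm nu /\ j' ∘ u = idm R.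
Proof.
  intros hQ hm hmr.
  destruct (isSum_complement_unique _ _ _ hmr (iota_complement_step hQ hm hmr))
    as [c [d [ec [ed [_ ecd]]]]].
  destruct (jnu_factors_through_complement hQ hm hmr) as [j' hj'].
  destruct (hterm R c) as [u [hu _]].
  destruct (isSum_monic _ _ hmr) as [_ r_monic].
  assert (r_jnu : r = jnu Y ∘ u).
  { apply (cia_solutions_eq (free_cia Y) (cinl K ∘ c)); rewrite comp_assoc, copair_inl.
    - symmetry. exact ec.
    - rewrite (jnu_eq Y) at 1.
      rewrite <- comp_assoc, hu, fmap_comp, !comp_assoc. reflexivity. }
  assert (j'_coalg : c ∘ j' = HM j' ∘ t).
  { assert (j'_eq : j' = d ∘ HM j' ∘ t).
    { apply r_monic. rewrite hj', !comp_assoc, ed, <- (comp_assoc (tau Y)), <- fmap_comp, hj'.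
      apply jnu_eq. }
    rewrite j'_eq at 1. rewrite !comp_assoc, ecd, id_left. reflexivity. }
  exists j', u. split; [exact hj'|]. split.
  - apply (terminal_hom_unique t).
    + rewrite comp_assoc, hu, <- comp_assoc, j'_coalg, comp_assoc, <- fmap_comp. reflexivity.
    + rewrite fmap_id, id_left, id_right. reflexivity.
  - apply r_monic. rewrite comp_assoc, hj', <- r_jnu, id_right. reflexivity.
Qed.

Theorem free_cia_decomposition (Y : Ob C) :
  exists (Q : Ob C) (q : forall k, Hom (iterH k Y) Q) (m : Hom Q (T Y)),
    IsCoproduct (fun k => iterH k Y) Q q /\ (forall k, m ∘ q k = iota Y k) /\ IsSum m (jnu Y).
Proof.
  destruct hext as [hcc _].
  destruct (hcc nat countable_nat (fun k => iterH k Y)) as [Q [q hQ]].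
  destruct (coproduct_copair hQ (iota Y)) as [m hm].
  destruct (proj1 (isCoprodInj_isSum m) (iota_copair_coprodInj hQ hm)) as [R [r hmr]].
  destruct (iota_complement_iso_nu hQ hm hmr) as [j' [u [hj' [uj' j'u]]]].
  exists Q, q, m. split; [exact hQ|]. split; [exact hm|].
  rewrite <- hj'. apply isSum_sym, (isSum_iso_pre _ _ j' u uj' j'u), isSum_sym, hmr.
Qed.

Lemma free_hom_unique {Y A : Ob C} (a : Hom (HO A) A) (g1 g2 : Hom (T Y) A) :
  g1 ∘ tau Y = a ∘ HM g1 -> g2 ∘ tau Y = a ∘ HM g2 ->
  g1 ∘ eta Y = g2 ∘ eta Y -> g1 ∘ jnu Y = g2 ∘ jnu Y -> g1 = g2.
Proof.
  intros h1 h2 h3 h4.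
  destruct (free_cia_decomposition Y) as [Q [q [m [hQ [hm hsum]]]]].
  apply (proj2 hsum); [|exact h4].
  apply (coproduct_ext hQ). intro k.
  rewrite <- !comp_assoc, hm, (hom_iota a g1 h1), (hom_iota a g2 h2), h3. reflexivity.
Qed.

Lemma free_hom_exists {Y A : Ob C} (a : Hom (HO A) A) (f : Hom Y A) (h : Hom nu A) :
  h ∘ tinv = a ∘ HM h ->
  exists g : Hom (T Y) A, g ∘ tau Y = a ∘ HM g /\ g ∘ eta Y = f /\ g ∘ jnu Y = h.
Proof.
  intros hh.
  destruct (free_cia_decomposition Y) as [Q [q [m [hQ [hm hsum]]]]].
  destruct (coproduct_copair hQ (iter_fold a f)) as [gQ hgQ].
  destruct (proj1 hsum A gQ h) as [g [gm gj]].
  assert (g_iota : forall k, g ∘ iota Y k = iter_fold a f k).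
  { intro k. rewrite <- hm, comp_assoc, gm. apply hgQ. }
  pose proof (hpres nat countable_nat _ Q q hQ) as hHQ. simpl in hHQ.
  exists g. split; [|split; [exact (g_iota 0) | exact gj]].
  apply (proj2 (isSum_fmap _ _ hpres hsum)).
  - apply (coproduct_ext hHQ). intro k. rewrite <- !comp_assoc, <- !fmap_comp, hm.
    change (g ∘ (tau Y ∘ HM (iota Y k))) with (g ∘ iota Y (S k)).
    rewrite !g_iota. reflexivity.
  - rewrite <- !comp_assoc, <- jnu_hom, comp_assoc, gj, hh, <- fmap_comp, gj. reflexivity.
Qed.

(** * The Eilenberg-Moore category and the slice category *)

Local Notation Slice := (SliceObj H nu tinv).
Local Notation sl_car := (sl_car H nu tinv).
Local Notation sl_alg := (sl_alg H nu tinv).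
Local Notation sl_map := (sl_map H nu tinv).

Definition slice_alpha (x : Slice) : Hom (T (sl_car x)) (sl_car x) :=
  proj1_sig (constructive_indefinite_description _
    (free_hom_exists (sl_alg x) (idm _) (sl_map x) (sl_mor H nu tinv x))).

Section SliceAlpha.
Variable x : Slice.

Lemma slice_alpha_spec :
  slice_alpha x ∘ tau _ = sl_alg x ∘ HM (slice_alpha x) /\ slice_alpha x ∘ eta _ = idm _ /\
  slice_alpha x ∘ jnu _ = sl_map x.
Proof.
  exact (proj2_sig (constructive_indefinite_description _
    (free_hom_exists (sl_alg x) (idm _) (sl_map x) (sl_mor H nu tinv x)))).
Qed.

Lemma slice_alpha_hom : slice_alpha x ∘ tau _ = sl_alg x ∘ HM (slice_alpha x).
Proof. apply slice_alpha_spec. Qed.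

Lemma slice_alpha_eta : slice_alpha x ∘ eta _ = idm _.
Proof. apply slice_alpha_spec. Qed.

Lemma slice_alpha_jnu : slice_alpha x ∘ jnu _ = sl_map x.
Proof. apply slice_alpha_spec. Qed.

Lemma slice_alpha_unique (g : Hom (T (sl_car x)) (sl_car x)) :
  g ∘ tau _ = sl_alg x ∘ HM g -> g ∘ eta _ = idm _ -> g ∘ jnu _ = sl_map x ->
  g = slice_alpha x.
Proof.
  intros h1 h2 h3. apply (free_hom_unique (sl_alg x)); auto using slice_alpha_hom.
  - rewrite h2, slice_alpha_eta. reflexivity.
  - rewrite h3, slice_alpha_jnu. reflexivity.
Qed.

End SliceAlpha.

Lemma slice_alpha_natural (x y : Slice) (h : Hom (sl_car x) (sl_car y)) :
  CM (SliceCat H nu tinv) (x := x) (y := y) h ->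
  h ∘ slice_alpha x = slice_alpha y ∘ Tmap H F h.
Proof.
  intros [E1 E2]. unfold IsAlgMor in E1.
  apply (free_hom_unique (sl_alg y)).
  - rewrite <- comp_assoc, slice_alpha_hom, comp_assoc, E1, <- comp_assoc, <- fmap_comp.
    reflexivity.
  - rewrite <- comp_assoc, tmap_hom, comp_assoc, slice_alpha_hom, <- comp_assoc, <- fmap_comp.
    reflexivity.
  - rewrite <- !comp_assoc, slice_alpha_eta, id_right, tmap_eta, comp_assoc, slice_alpha_eta.
    rewrite id_left. reflexivity.
  - rewrite <- !comp_assoc, slice_alpha_jnu, E2, (hom_jnu _ (tmap_hom h)), slice_alpha_jnu.
    reflexivity.
Qed.

Local Notation EM := (EMObj H F).

(* [tau = mu . tau . H eta] makes every Eilenberg-Moore algebra an algebra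
   morphism out of the free cia. *)
Lemma em_alg_hom (x : EM) :
  em_alg H F x ∘ tau _ = (em_alg H F x ∘ tau _ ∘ HM (eta _)) ∘ HM (em_alg H F x).
Proof.
  destruct x as [A al al_unit al_assoc]. simpl.
  assert (tau_mu : Tmu H F A ∘ tau (T A) ∘ HM (eta (T A)) = tau A).
  { rewrite tmu_hom, <- comp_assoc, <- fmap_comp, tmu_eta, fmap_id, id_right. reflexivity. }
  rewrite <- tau_mu at 1.
  rewrite !comp_assoc, al_assoc, (postcompose_eq (tmap_hom al)), <- !comp_assoc, <- !fmap_comp,
    tmap_eta, fmap_comp, !comp_assoc.
  reflexivity.
Qed.

Lemma em_to_slice_mor (x : EM) :
  IsAlgMor H tinv (em_alg H F x ∘ tau _ ∘ HM (eta _)) (em_alg H F x ∘ jnu _).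
Proof.
  unfold IsAlgMor. rewrite <- comp_assoc, jnu_hom, comp_assoc.
  rewrite (em_alg_hom x) at 1. rewrite fmap_comp, !comp_assoc. reflexivity.
Qed.

Definition em_to_slice (x : EM) : Slice :=
  Build_SliceObj H nu tinv (em_car H F x) (em_alg H F x ∘ tau _ ∘ HM (eta _))
    (em_alg H F x ∘ jnu _) (em_to_slice_mor x).

Lemma slice_alpha_assoc (x : Slice) :
  slice_alpha x ∘ Tmu H F (sl_car x) = slice_alpha x ∘ Tmap H F (slice_alpha x).
Proof.
  apply (free_hom_unique (sl_alg x)).
  - rewrite <- comp_assoc, tmu_hom, comp_assoc, slice_alpha_hom, <- comp_assoc, <- fmap_comp.
    reflexivity.
  - rewrite <- comp_assoc, tmap_hom, comp_assoc, slice_alpha_hom, <- comp_assoc, <- fmap_comp.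
    reflexivity.
  - rewrite <- !comp_assoc, tmu_eta, tmap_eta, comp_assoc, slice_alpha_eta, id_left, id_right.
    reflexivity.
  - rewrite <- !comp_assoc, (hom_jnu _ (tmu_hom _)), (hom_jnu _ (tmap_hom _)). reflexivity.
Qed.

Definition slice_to_em (x : Slice) : EM :=
  {| em_car := sl_car x; em_alg := slice_alpha x;
     em_unit := slice_alpha_eta x; em_assoc := slice_alpha_assoc x |}.

Lemma slice_obj_eq (A : Ob C) (a1 a2 : Hom (HO A) A) (h1 h2 : Hom nu A) p1 p2 :
  a1 = a2 -> h1 = h2 ->
  Build_SliceObj H nu tinv A a1 h1 p1 = Build_SliceObj H nu tinv A a2 h2 p2.
Proof. intros -> ->. f_equal. apply proof_irrelevance. Qed.

Lemma em_obj_eq (A : Ob C) (a1 a2 : Hom (T A) A) p1 p2 q1 q2 :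
  a1 = a2 -> Build_EMObj H F A a1 p1 q1 = Build_EMObj H F A a2 p2 q2.
Proof. intros ->. f_equal; apply proof_irrelevance. Qed.

Lemma em_to_sliceK (x : EM) : slice_to_em (em_to_slice x) = x.
Proof.
  pose proof (slice_alpha_unique (em_to_slice x) (em_alg H F x) (em_alg_hom x) (em_unit H F x)
    eq_refl) as E.
  destruct x. apply em_obj_eq. symmetry. exact E.
Qed.

Lemma slice_to_emK (x : Slice) : em_to_slice (slice_to_em x) = x.
Proof.
  pose proof (slice_alpha_hom x) as al_hom. pose proof (slice_alpha_eta x) as al_eta.
  pose proof (slice_alpha_jnu x) as al_jnu.
  destruct x as [A a h hh]. apply slice_obj_eq; auto. simpl in *.
  rewrite al_hom, <- comp_assoc, <- fmap_comp, al_eta, fmap_id, id_right. reflexivity.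
Qed.

Lemma em_slice_mor_iff (x y : EM) (h : Hom (em_car H F x) (em_car H F y)) :
  CM (EMCat H F) (x := x) (y := y) h <->
  CM (SliceCat H nu tinv) (x := em_to_slice x) (y := em_to_slice y) h.
Proof.
  pose proof (em_alg_hom x) as al_hom. pose proof (em_alg_hom y) as be_hom.
  destruct x as [A al al_unit al_assoc], y as [B be be_unit be_assoc].
  simpl in *. unfold IsAlgMor. split.
  - intros E. split.
    + rewrite !comp_assoc, E, (postcompose_eq (tmap_hom h)), <- !comp_assoc, <- !fmap_comp,
        tmap_eta, fmap_comp, !comp_assoc.
      reflexivity.
    + rewrite comp_assoc, E, <- comp_assoc, (hom_jnu _ (tmap_hom h)). reflexivity.
  - intros [E1 E2]. rewrite !comp_assoc in E1.
    apply (free_hom_unique (be ∘ tau B ∘ HM (eta B))).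
    + rewrite <- comp_assoc, al_hom, !comp_assoc, E1, fmap_comp, !comp_assoc. reflexivity.
    + rewrite <- comp_assoc, tmap_hom, comp_assoc. rewrite be_hom at 1.
      rewrite fmap_comp, !comp_assoc. reflexivity.
    + rewrite <- !comp_assoc, al_unit, tmap_eta, comp_assoc, be_unit, id_right, id_left.
      reflexivity.
    + rewrite <- !comp_assoc, (hom_jnu _ (tmap_hom h)). exact E2.
Qed.

(** * Bloom algebras *)

Definition unfold_nu {X : Ob C} (e : Hom X (HO X)) : Hom X nu :=
  proj1_sig (constructive_indefinite_description _ (hterm X e)).

Lemma unfold_nu_hom {X : Ob C} (e : Hom X (HO X)) : t ∘ unfold_nu e = HM (unfold_nu e) ∘ e.
Proof. exact (proj1 (proj2_sig (constructive_indefinite_description _ (hterm X e)))). Qed.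

Lemma unfold_nu_t : unfold_nu t = idm nu.
Proof.
  apply (terminal_hom_unique t); [apply unfold_nu_hom|].
  rewrite fmap_id, id_left, id_right. reflexivity.
Qed.

Lemma unfold_nu_natural {X Y : Ob C} (e : Hom X (HO X)) (f : Hom Y (HO Y)) (h : Hom X Y) :
  f ∘ h = HM h ∘ e -> unfold_nu f ∘ h = unfold_nu e.
Proof.
  intros E. apply (terminal_hom_unique e); [|apply unfold_nu_hom].
  rewrite comp_assoc, unfold_nu_hom, <- comp_assoc, E, comp_assoc, <- fmap_comp. reflexivity.
Qed.

Lemma slice_unfold_sol (x : Slice) (X : Ob C) (e : Hom X (HO X)) :
  sl_map x ∘ unfold_nu e = sl_alg x ∘ HM (sl_map x ∘ unfold_nu e) ∘ e.
Proof.
  pose proof (sl_mor H nu tinv x) as hx. unfold IsAlgMor in hx.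
  rewrite <- (id_right (sl_map x)) at 1. rewrite <- (proj1 htinv), comp_assoc, hx.
  rewrite <- comp_assoc, unfold_nu_hom, fmap_comp, !comp_assoc. reflexivity.
Qed.

Lemma slice_unfold_natural (x : Slice) (X Y : Ob C) (e : Hom X (HO X)) (f : Hom Y (HO Y))
  (h : Hom X Y) : f ∘ h = HM h ∘ e -> sl_map x ∘ unfold_nu f ∘ h = sl_map x ∘ unfold_nu e.
Proof. intros E. rewrite <- comp_assoc, (unfold_nu_natural e f h E). reflexivity. Qed.

Definition slice_to_bloom (x : Slice) : BloomObj H :=
  Build_BloomObj H (sl_car x) (sl_alg x) (fun X e => sl_map x ∘ unfold_nu e)
    (slice_unfold_sol x) (slice_unfold_natural x).

Lemma bloom_to_slice_mor (y : BloomObj H) : IsAlgMor H tinv (bl_alg H y) (bl_dag H y nu t).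
Proof.
  unfold IsAlgMor. rewrite (bl_sol H y nu t) at 1.
  rewrite <- comp_assoc, (proj2 htinv), id_right. reflexivity.
Qed.

Definition bloom_to_slice (y : BloomObj H) : Slice :=
  Build_SliceObj H nu tinv (bl_car H y) (bl_alg H y) (bl_dag H y nu t) (bloom_to_slice_mor y).

Lemma bloom_obj_eq (A : Ob C) (a : Hom (HO A) A) d1 d2 p1 p2 q1 q2 :
  (forall X e, d1 X e = d2 X e) -> Build_BloomObj H A a d1 p1 q1 = Build_BloomObj H A a d2 p2 q2.
Proof.
  intros E. assert (d1 = d2) as ->.
  { apply functional_extensionality_dep. intro X. apply functional_extensionality. apply E. }
  f_equal; apply proof_irrelevance.
Qed.

Lemma slice_to_bloomK (x : Slice) : bloom_to_slice (slice_to_bloom x) = x.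
Proof. destruct x. apply slice_obj_eq; simpl; [|rewrite unfold_nu_t, id_right]; reflexivity. Qed.

Lemma bloom_to_sliceK (y : BloomObj H) : slice_to_bloom (bloom_to_slice y) = y.
Proof.
  destruct y as [A a d d_sol d_nat]. apply bloom_obj_eq. intros X e. apply d_nat, unfold_nu_hom.
Qed.

Lemma slice_bloom_mor_iff (x y : Slice) (h : Hom (sl_car x) (sl_car y)) :
  CM (SliceCat H nu tinv) (x := x) (y := y) h <->
  CM (BloomCat H) (x := slice_to_bloom x) (y := slice_to_bloom y) h.
Proof.
  simpl. split; intros [E1 E2]; split; auto.
  - intros X e. rewrite comp_assoc, E2. reflexivity.
  - specialize (E2 nu t). rewrite unfold_nu_t, !id_right in E2. exact E2.
Qed.

Lemma bloom_slice_mor_iff (x y : BloomObj H) (h : Hom (bl_car H x) (bl_car H y)) :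
  CM (BloomCat H) (x := x) (y := y) h <->
  CM (SliceCat H nu tinv) (x := bloom_to_slice x) (y := bloom_to_slice y) h.
Proof.
  simpl. split; intros [E1 E2]; split; auto. intros X e.
  rewrite <- (bl_fun H x X nu e t (unfold_nu e) (unfold_nu_hom e)),
    <- (bl_fun H y X nu e t (unfold_nu e) (unfold_nu_hom e)), comp_assoc, E2.
  reflexivity.
Qed.

(** * Complete Elgot algebras *)

Lemma free_sol_inl_t (A : Ob C) : free_sol A (cinl K ∘ t) = jnu A.
Proof. symmetry. apply free_sol_unique. coprod_simpl. apply jnu_eq. Qed.

Definition slice_dagger (x : Slice) (X : Ob C) (e : Hom X (HO X ⊕ sl_car x)) : Hom X (sl_car x) :=
  slice_alpha x ∘ free_sol _ e.

Section SliceDagger.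
Variable x : Slice.

Lemma slice_dagger_sol (X : Ob C) (e : Hom X (HO X ⊕ sl_car x)) :
  IsSolution K H (sl_alg x) e (slice_dagger x X e).
Proof.
  apply isSolution_iff. unfold slice_dagger. rewrite (free_sol_eq _ e) at 1.
  rewrite comp_assoc, comp_copair, comp_assoc, slice_alpha_hom, slice_alpha_eta, fmap_comp,
    !comp_assoc.
  reflexivity.
Qed.

Lemma slice_dagger_natural (X Y : Ob C) (e : Hom X (HO X ⊕ sl_car x))
  (f : Hom Y (HO Y ⊕ sl_car x)) (k : Hom X Y) :
  f ∘ k = sum_map K (HM k) (idm _) ∘ e -> slice_dagger x Y f ∘ k = slice_dagger x X e.
Proof.
  intros E. unfold slice_dagger. rewrite <- comp_assoc, (free_sol_natural _ e f k E).
  reflexivity.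
Qed.

Lemma slice_dagger_compositional (X Y : Ob C) (e : Hom X (HO X ⊕ Y))
  (f : Hom Y (HO Y ⊕ sl_car x)) :
  slice_dagger x (X ⊕ Y) (oplus K H e f) ∘ cinl K =
  slice_dagger x X (bullet K H (slice_dagger x Y f) e).
Proof.
  unfold slice_dagger at 1 2.
  rewrite <- comp_assoc, free_sol_oplus_inl, free_sol_bullet, !comp_assoc.
  f_equal. pose proof (ext_hom (free_cia _) (free_sol _ f)) as g_hom.
  apply (free_hom_unique (sl_alg x)).
  - rewrite <- comp_assoc, g_hom, comp_assoc, slice_alpha_hom, <- comp_assoc, <- fmap_comp.
    reflexivity.
  - rewrite <- comp_assoc, tmap_hom, comp_assoc, slice_alpha_hom, <- comp_assoc, <- fmap_comp.
    reflexivity.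
  - rewrite <- !comp_assoc, ext_eta, tmap_eta, comp_assoc, slice_alpha_eta, id_left;
      [reflexivity | apply free_cia].
  - rewrite <- !comp_assoc, (hom_jnu _ g_hom), (hom_jnu _ (tmap_hom _)). reflexivity.
Qed.

End SliceDagger.

Definition slice_to_elgot (x : Slice) : ElgotObj K H :=
  Build_ElgotObj K H (sl_car x) (sl_alg x) (slice_dagger x) (slice_dagger_sol x)
    (slice_dagger_natural x) (slice_dagger_compositional x).

Lemma elgot_to_slice_mor (z : ElgotObj K H) :
  IsAlgMor H tinv (el_alg K H z) (el_dag K H z nu (cinl K ∘ t)).
Proof.
  unfold IsAlgMor. pose proof (el_sol K H z nu (cinl K ∘ t)) as S. apply isSolution_iff in S.
  rewrite S at 1. rewrite comp_assoc, copair_inl, <- comp_assoc, (proj2 htinv), id_right.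
  reflexivity.
Qed.

Definition elgot_to_slice (z : ElgotObj K H) : Slice :=
  Build_SliceObj H nu tinv (el_car K H z) (el_alg K H z) (el_dag K H z nu (cinl K ∘ t))
    (elgot_to_slice_mor z).

Lemma elgot_obj_eq (A : Ob C) (a : Hom (HO A) A) d1 d2 p1 p2 q1 q2 r1 r2 :
  (forall X e, d1 X e = d2 X e) ->
  Build_ElgotObj K H A a d1 p1 q1 r1 = Build_ElgotObj K H A a d2 p2 q2 r2.
Proof.
  intros E. assert (d1 = d2) as ->.
  { apply functional_extensionality_dep. intro X. apply functional_extensionality. apply E. }
  f_equal; apply proof_irrelevance.
Qed.

Lemma slice_to_elgotK (x : Slice) : elgot_to_slice (slice_to_elgot x) = x.
Proof.
  pose proof (slice_alpha_jnu x) as al_jnu. destruct x as [A a h hh].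
  apply slice_obj_eq; [reflexivity|]. simpl in *.
  unfold slice_dagger. rewrite free_sol_inl_t. exact al_jnu.
Qed.

(* The dagger of the inverse [iinv] of [[tau, eta]] is an algebra morphism
   [T A -> A] fixing [eta] and [jnu], hence it is the structure map. *)
Lemma elgot_dagger_free_sol (z : ElgotObj K H) (X : Ob C) (e : Hom X (HO X ⊕ el_car K H z)) :
  slice_alpha (elgot_to_slice z) ∘ free_sol _ e = el_dag K H z X e.
Proof.
  destruct (proj1 (isSum_tau_eta (el_car K H z)) _ (cinl K) (cinr K)) as [iinv [i_tau i_eta]].
  pose proof (el_sol K H z (T (el_car K H z)) iinv) as S. apply isSolution_iff in S.
  assert (beta_alpha : el_dag K H z (T (el_car K H z)) iinv = slice_alpha (elgot_to_slice z)).
  { apply (slice_alpha_unique (elgot_to_slice z)); simpl.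
    - rewrite S at 1. rewrite <- comp_assoc, i_tau, copair_inl. reflexivity.
    - rewrite S at 1. rewrite <- comp_assoc, i_eta, copair_inr. reflexivity.
    - apply (el_fun K H z). rewrite (jnu_eq _) at 1. rewrite !comp_assoc, i_tau.
      coprod_simpl. reflexivity. }
  rewrite <- beta_alpha. apply (el_fun K H z).
  rewrite (free_sol_eq _ e) at 1. rewrite comp_assoc, comp_copair, comp_assoc, i_tau, i_eta.
  unfold sum_map. rewrite id_right. reflexivity.
Qed.

Lemma elgot_to_sliceK (z : ElgotObj K H) : slice_to_elgot (elgot_to_slice z) = z.
Proof.
  pose proof (elgot_dagger_free_sol z) as E.
  destruct z. apply elgot_obj_eq. exact E.
Qed.

(* Test [h] on the equation [e0 = [inl . H inr, inr]], whose solution is [[a, id]]. *)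
Lemma elgot_hom_alg_hom (z w : ElgotObj K H) (h : Hom (el_car K H z) (el_car K H w)) :
  CM (ElgotCat K H) (x := z) (y := w) h -> h ∘ el_alg K H z = el_alg K H w ∘ HM h.
Proof.
  intros E.
  set (e0 := copair K (cinl K ∘ HM (cinr K)) (cinr K) :
         Hom (HO (el_car K H z) ⊕ el_car K H z)
             (HO (HO (el_car K H z) ⊕ el_car K H z) ⊕ el_car K H z)).
  specialize (E _ e0).
  pose proof (el_sol K H z _ e0) as S1. apply isSolution_iff in S1.
  pose proof (el_sol K H w _ (bullet K H h e0)) as S2. apply isSolution_iff in S2.
  set (s := el_dag K H z _ e0) in *. set (s' := el_dag K H w _ (bullet K H h e0)) in *.
  clearbody s s'.
  assert (s_inr : s ∘ cinr K = idm _) by (rewrite S1; unfold e0; coprod_simpl; reflexivity).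
  assert (s_inl : s ∘ cinl K = el_alg K H z).
  { rewrite S1 at 1. unfold e0. coprod_simpl.
    rewrite <- (comp_assoc _ (HM s)), <- fmap_comp, s_inr, fmap_id, id_right. reflexivity. }
  assert (s'_inr : s' ∘ cinr K = h) by (rewrite S2; unfold e0, bullet; coprod_simpl; reflexivity).
  assert (s'_inl : s' ∘ cinl K = el_alg K H w ∘ HM h).
  { rewrite S2 at 1. unfold e0, bullet. coprod_simpl.
    rewrite <- (comp_assoc _ (HM s')), <- fmap_comp, s'_inr. reflexivity. }
  rewrite <- s_inl, comp_assoc, E. exact s'_inl.
Qed.

Lemma slice_elgot_mor_iff (x y : Slice) (h : Hom (sl_car x) (sl_car y)) :
  CM (SliceCat H nu tinv) (x := x) (y := y) h <->
  CM (ElgotCat K H) (x := slice_to_elgot x) (y := slice_to_elgot y) h.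
Proof.
  split.
  - intros hm X e. simpl. unfold slice_dagger.
    rewrite comp_assoc, (slice_alpha_natural x y h hm), <- comp_assoc, free_sol_bullet.
    reflexivity.
  - intros E. split; [exact (elgot_hom_alg_hom (slice_to_elgot x) (slice_to_elgot y) h E)|].
    assert (h_t : bullet K H h (cinl K ∘ t) = cinl K ∘ t).
    { unfold bullet. rewrite comp_assoc, sum_map_inl, id_right. reflexivity. }
    specialize (E nu (cinl K ∘ t)). simpl in E. unfold slice_dagger in E.
    rewrite h_t, !free_sol_inl_t, !slice_alpha_jnu in E. exact E.
Qed.

Lemma em_slice_iso : CatIso (EMCat H F) (SliceCat H nu tinv).
Proof.
  apply (@catIso_of_relabelling (EMCat H F) (SliceCat H nu tinv) em_to_slice slice_to_em
           (fun _ _ h => h) (fun _ _ h => h));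
    auto using em_to_sliceK, slice_to_emK, em_slice_mor_iff.
Qed.

Lemma slice_bloom_iso : CatIso (SliceCat H nu tinv) (BloomCat H).
Proof.
  apply (@catIso_of_relabelling (SliceCat H nu tinv) (BloomCat H) slice_to_bloom bloom_to_slice
           (fun _ _ h => h) (fun _ _ h => h));
    auto using slice_to_bloomK, bloom_to_sliceK, slice_bloom_mor_iff.
Qed.

Lemma bloom_elgot_iso : CatIso (BloomCat H) (ElgotCat K H).
Proof.
  apply (@catIso_of_relabelling (BloomCat H) (ElgotCat K H)
           (fun y => slice_to_elgot (bloom_to_slice y)) (fun z => slice_to_bloom (elgot_to_slice z))
           (fun _ _ h => h) (fun _ _ h => h));
    auto.
  - intros y. rewrite slice_to_elgotK. apply bloom_to_sliceK.
  - intros z. rewrite slice_to_bloomK. apply elgot_to_sliceK.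
  - intros x y h. rewrite bloom_slice_mor_iff. apply slice_elgot_mor_iff.
Qed.

End TerminalCoalgebra.

End FreeCia.

End HyperExtensive.

End ElgotAlgebras.

Theorem mainTheorem7 (C : Category) (K : BinCoprod C) (H : Functor C C)
  (hC : IsCategory C) (hK : IsBinCoprod K) (hH : IsFunctor H)
  (hext : @HyperExtensive C) (hpres : PreservesCountableCoproducts H)
  (nu : Ob C) (t : Hom nu (fobj H nu)) (hterm : IsTerminalCoalg H t)
  (tinv : Hom (fobj H nu) nu) (htinv : tinv ∘ t = idm nu /\ t ∘ tinv = idm (fobj H nu))
  (F : FreeCiaData H) (hF : IsFreeCia K H F) :
  CatIso (EMCat H F) (SliceCat H nu tinv) /\
  CatIso (SliceCat H nu tinv) (BloomCat H) /\
  CatIso (BloomCat H) (ElgotCat K H).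
Proof.
  split; [|split]; [eapply em_slice_iso | eapply slice_bloom_iso | eapply bloom_elgot_iso];
    eassumption.
Qed.
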